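(* Let $\alpha\in(0,1)\setminus\mathbb{Q}$. There is $\beta_0>0$ such that for every irrational $\beta\in(0,\beta_0)$ the following holds for the maps $T_1,T_2$ of the circle $\mathbb{S}=\mathbb{R}/\mathbb{Z}$ defined below: for every arc $K\subset\mathbb{S}$ of positive length there is a finite word $j_1,\dots,j_k\in\{1,2\}$ such that $(T_{j_1}\circ\dots\circ T_{j_k})(\mathbb{S})\subset K$.
   Context: $\mathbb{S}=\mathbb{R}/\mathbb{Z}$, with points represented by $y\in[0,1)$. Let $\delta=1-\alpha$. $T_1(y)=y+\alpha \bmod 1$. $T_2$ is the double rotation $T_2(y)=y+\alpha+\beta\bmod 1$ if $y\le\delta$, and $T_2(y)=y+\alpha\bmod1$ if $y>\delta$. *)

From Stdlib Require Import Reals List ZArith.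
Open Scope R_scope.

Definition irrational (x : R) : Prop :=
  forall (p q : Z), q <> 0%Z -> x * IZR q <> IZR p.

Definition mod1 (x : R) : R := frac_part x.

Definition T1 (alpha : R) (y : R) : R := mod1 (y + alpha).

Definition T2 (alpha beta : R) (y : R) : R :=
  if Rle_dec y (1 - alpha) then mod1 (y + alpha + beta) else mod1 (y + alpha).

Definition Tj (alpha beta : R) (j : nat) : R -> R :=
  if Nat.eqb j 1 then T1 alpha else T2 alpha beta.

Definition word_map (alpha beta : R) (w : list nat) (y : R) : R :=
  fold_right (fun j acc => Tj alpha beta j acc) y w.

Definition in_arc (a L z : R) : Prop :=
  0 < mod1 (z - a) < L.

From Stdlib Require Import Reals List ZArith Lra Lia Classical Wf_nat.
Open Scope R_scope.

(* A word [T2 o T1^m] acts as the rotation by [(m + 1) al], except that the points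
   which [T1^m] sends into [[0, 1 - al]] move [be] further.  Since [m al mod 1] is dense,
   such a word can cut a given arc at any point: at the preimage of [1 - al] the lower
   piece overtakes the upper one by [be], at the preimage of [0] a gap [be] opens.
   Let [L] be the infimum of the lengths of arcs into which some word maps the circle.
   If [L > 2 be], the first kind of cut applied to a nearly optimal arc beats [L].  If
   [0 < L <= 2 be], cut a nearly optimal arc into two pieces separated by a gap; further
   words widen the gap by [be] at a time, so the gap follows the orbit [k be mod 1], and
   at the first [k] bringing [k be] within [L] of an integer the two pieces overlap,
   inside an arc shorter than [L].  So [L = 0], and a rotation moves a short enough
   image arc into any given arc. *)

Definition eqmod1 (x y : R) : Prop := exists n : Z, x - y = IZR n.

Lemma eqmod1_refl x : eqmod1 x x.
Proof. exists 0%Z; simpl; ring. Qed.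

Lemma eqmod1_sym x y : eqmod1 x y -> eqmod1 y x.
Proof. intros [n H]; exists (- n)%Z; rewrite opp_IZR; lra. Qed.

Lemma eqmod1_trans x y z : eqmod1 x y -> eqmod1 y z -> eqmod1 x z.
Proof. intros [n H] [m H']; exists (n + m)%Z; rewrite plus_IZR; lra. Qed.

Lemma eqmod1_addr x y c : eqmod1 x y -> eqmod1 (x + c) (y + c).
Proof. intros [n H]; exists n; lra. Qed.

Lemma eqmod1_addZ x n : eqmod1 (x + IZR n) x.
Proof. exists n; ring. Qed.

Lemma eqmod1_eq x y : x = y -> eqmod1 x y.
Proof. intros ->; apply eqmod1_refl. Qed.

Lemma mod1_eqmod1 x : eqmod1 (mod1 x) x.
Proof. exists (- Int_part x)%Z; unfold mod1, frac_part; rewrite opp_IZR; ring. Qed.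

Lemma mod1_bounds x : 0 <= mod1 x < 1.
Proof. unfold mod1; destruct (base_fp x); lra. Qed.

Lemma IZR_abs_lt1 n : -1 < IZR n < 1 -> n = 0%Z.
Proof.
  intros [H1 H2]; change (-1) with (IZR (-1)) in H1; change 1 with (IZR 1) in H2.
  apply lt_IZR in H1; apply lt_IZR in H2; lia.
Qed.

Lemma eqmod1_unit_eq u v : eqmod1 u v -> 0 <= u < 1 -> 0 <= v < 1 -> u = v.
Proof.
  intros [n H] Hu Hv; assert (n = 0%Z) by (apply IZR_abs_lt1; lra).
  subst; simpl in H; lra.
Qed.

Lemma mod1_eq x y : eqmod1 x y -> 0 <= y < 1 -> mod1 x = y.
Proof.
  intros Hxy Hy; apply eqmod1_unit_eq; [| apply mod1_bounds | exact Hy].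
  exact (eqmod1_trans _ _ _ (mod1_eqmod1 x) Hxy).
Qed.

Lemma least_nat (Q : nat -> Prop) : (exists k, Q k) ->
  exists k, Q k /\ forall j, (j < k)%nat -> ~ Q j.
Proof.
  intros H; destruct (dec_inh_nat_subset_has_unique_least_element Q (fun n => classic (Q n)) H)
    as [k [[Hk Hmin] _]].
  exists k; split; [exact Hk|]; intros j Hj HQ; specialize (Hmin j HQ); lia.
Qed.

Lemma finite_pos_lower_bound (f : nat -> R) K : (forall j, (1 <= j < K)%nat -> 0 < f j) ->
  exists e, 0 < e /\ forall j, (1 <= j < K)%nat -> e <= f j.
Proof.
  induction K as [|K IH]; intros H; [exists 1; split; [lra | intros; lia]|].
  destruct IH as [e [He He']]; [intros; apply H; lia|].
  destruct (Nat.eq_dec K 0) as [->|HK]; [exists e; split; [exact He | intros; lia]|].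
  exists (Rmin e (f K)); split; [apply Rmin_glb_lt; [exact He | apply H; lia]|].
  intros j Hj; destruct (Nat.eq_dec j K) as [->|Hj']; [apply Rmin_r|].
  eapply Rle_trans; [apply Rmin_l | apply He'; lia].
Qed.

Lemma exists_pos_below3 x y z : 0 < x -> 0 < y -> 0 < z ->
  exists e, 0 < e /\ e <= x /\ e <= y /\ e <= z.
Proof. intros; exists (Rmin x (Rmin y z)); unfold Rmin; repeat destruct Rle_dec; lra. Qed.

Definition is_inf (P : R -> Prop) (L : R) : Prop :=
  (forall l, P l -> L <= l) /\ (forall e, 0 < e -> exists l, P l /\ l < L + e).

Lemma is_inf_exists (P : R -> Prop) : (exists l, P l) -> (forall l, P l -> 0 <= l) ->
  exists L, is_inf P L.
Proof.
  intros [l0 Hl0] Hpos.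
  destruct (completeness (fun x => P (- x))) as [m [Hub Hlub]].
  - exists 0; intros x Hx; apply Hpos in Hx; lra.
  - exists (- l0); rewrite Ropp_involutive; exact Hl0.
  - exists (- m); split.
    + intros l Hl; enough (- l <= m) by lra; apply Hub; rewrite Ropp_involutive; exact Hl.
    + intros e He; apply NNPP; intros Hn.
      enough (m <= m - e) by lra; apply Hlub; intros x Hx.
      destruct (Rlt_le_dec (- x) (- m + e)) as [Hlt|Hge]; [|lra].
      exfalso; apply Hn; exists (- x); split; assumption.
Qed.

Lemma pigeonhole n (f : nat -> nat) : (forall i, (i <= n)%nat -> (f i < n)%nat) ->
  exists i j, (i < j <= n)%nat /\ f i = f j.
Proof.
  revert f; induction n as [|n IH]; intros f Hf; [specialize (Hf 0%nat (le_n 0)); lia|].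
  destruct (classic (exists i, (i <= n)%nat /\ f i = f (S n))) as [[i [Hi Hfi]]|Hno].
  { exists i, (S n); split; [lia | exact Hfi]. }
  (* Redirect the value [n] to the value [f (S n)], which [f] misses on [0..n]. *)
  set (c := f (S n)); assert (Hc : (c < S n)%nat) by (apply Hf; lia).
  set (g := fun i => if Nat.eqb (f i) n then c else f i).
  destruct (IH g) as [i [j [Hij Hg]]].
  - intros i Hi; unfold g; destruct (Nat.eqb_spec (f i) n) as [E|E].
    + assert (c <> n) by (intro Hcn; apply Hno; exists i; split; [|unfold c in *]; lia). lia.
    + specialize (Hf i ltac:(lia)); lia.
  - exists i, j; split; [lia|]; unfold g in Hg.
    destruct (Nat.eqb_spec (f i) n); destruct (Nat.eqb_spec (f j) n); try lia;
      exfalso; apply Hno; [exists j | exists i]; split; try lia; unfold c in *; lia.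
Qed.

Lemma Int_part_nonneg x : 0 <= x -> (0 <= Int_part x)%Z.
Proof.
  intros Hx; destruct (base_Int_part x) as [H1 H2].
  assert (IZR (-1) < IZR (Int_part x)) by (simpl; lra); apply lt_IZR in H; lia.
Qed.

Lemma irrational_mult_neq0 t (k : nat) (N : Z) :
  irrational t -> (0 < k)%nat -> INR k * t + IZR N <> 0.
Proof.
  intros H Hk E; apply (H (- N)%Z (Z.of_nat k)); [lia|].
  rewrite <- INR_IZR_INZ, opp_IZR; lra.
Qed.

(* Dirichlet: two of the points [M * frac (i t)], [i <= M], share an integer part. *)
Lemma irrational_small_multiple t e : irrational t -> 0 < e ->
  exists (K : nat) (N : Z), (0 < K)%nat /\ 0 < Rabs (INR K * t + IZR N) < e.
Proof.
  intros H He; destruct (archimed_cor1 e He) as [M [HM HM0]].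
  set (x := fun i : nat => INR M * frac_part (INR i * t)).
  set (f := fun i => Z.to_nat (Int_part (x i))).
  assert (HMpos : 0 < INR M) by (apply lt_0_INR; lia).
  assert (Hx : forall i, 0 <= x i < INR M).
  { intros i; unfold x; destruct (base_fp (INR i * t)); split; [apply Rmult_le_pos; lra|].
    rewrite <- (Rmult_1_r (INR M)) at 2; apply Rmult_lt_compat_l; lra. }
  destruct (pigeonhole M f) as [i [j [Hij Hf]]].
  { intros i _; unfold f; destruct (Hx i) as [H1 H2].
    pose proof (Int_part_nonneg _ H1); destruct (base_Int_part (x i)) as [H3 _].
    assert (IZR (Int_part (x i)) < IZR (Z.of_nat M)) by (rewrite <- INR_IZR_INZ; lra).
    apply lt_IZR in H4; lia. }
  assert (Hint : Int_part (x i) = Int_part (x j)).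
  { unfold f in Hf; pose proof (Int_part_nonneg _ (proj1 (Hx i))).
    pose proof (Int_part_nonneg _ (proj1 (Hx j))); lia. }
  destruct (base_Int_part (x i)) as [Hi1 Hi2]; destruct (base_Int_part (x j)) as [Hj1 Hj2].
  rewrite Hint in Hi1, Hi2.
  exists (j - i)%nat, (Int_part (INR i * t) - Int_part (INR j * t))%Z; split; [lia|].
  assert (Heq : INR (j - i) * t + IZR (Int_part (INR i * t) - Int_part (INR j * t))
     = (x j - x i) / INR M).
  { unfold x, frac_part; rewrite minus_INR, minus_IZR by lia; field; lra. }
  split; [apply Rabs_pos_lt, irrational_mult_neq0; [exact H | lia]|].
  rewrite Heq; unfold Rdiv; rewrite Rabs_mult, Rabs_inv, (Rabs_right (INR M)) by lra.
  apply Rle_lt_trans with (1 * / INR M); [|lra].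
  apply Rmult_le_compat_r; [left; apply Rinv_0_lt_compat; lra | apply Rabs_le; lra].
Qed.

Lemma multiples_meet_interval d u v : 0 < d -> d < v - u ->
  exists (j : nat) (N : Z), u < INR j * d + IZR N < v.
Proof.
  intros Hd Huv; set (u' := u - IZR (Int_part u)); destruct (base_Int_part u) as [Hu1 Hu2].
  assert (Hu' : 0 <= u' / d).
  { unfold u'; apply Rmult_le_pos; [lra | left; apply Rinv_0_lt_compat; lra]. }
  set (q := Int_part (u' / d)); pose proof (Int_part_nonneg _ Hu') as Hq.
  destruct (base_Int_part (u' / d)) as [Hq1 Hq2]; fold q in Hq1, Hq2.
  exists (S (Z.to_nat q)), (Int_part u).
  rewrite S_INR, INR_IZR_INZ, Z2Nat.id by exact Hq.
  assert (A : u' < (IZR q + 1) * d).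
  { apply Rmult_lt_reg_r with (/ d); [apply Rinv_0_lt_compat; lra|].
    rewrite Rmult_assoc, Rinv_r, Rmult_1_r by lra; unfold Rdiv in Hq2; lra. }
  assert (B : IZR q * d <= u').
  { apply Rmult_le_reg_r with (/ d); [apply Rinv_0_lt_compat; lra|].
    rewrite Rmult_assoc, Rinv_r, Rmult_1_r by lra; unfold Rdiv in Hq1; lra. }
  unfold u' in *; nra.
Qed.

Definition dense_mod1 (t : R) : Prop :=
  forall u v, u < v -> exists (m : nat) (N : Z), u < INR m * t + IZR N < v.

Lemma irrational_dense_mod1 t : irrational t -> dense_mod1 t.
Proof.
  intros H u v Huv; destruct (irrational_small_multiple t (v - u)) as [K [N [HK [H1 H2]]]];
    [exact H | lra|].
  set (d := INR K * t + IZR N) in *; destruct (Rle_lt_dec 0 d) as [Hd|Hd].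
  - rewrite Rabs_right in H1, H2 by lra.
    destruct (multiples_meet_interval d u v) as [j [N' HN']]; [lra | lra|].
    exists (j * K)%nat, (Z.of_nat j * N + N')%Z.
    rewrite mult_INR, plus_IZR, mult_IZR, <- INR_IZR_INZ; unfold d in HN'; nra.
  - rewrite Rabs_left in H1, H2 by lra.
    destruct (multiples_meet_interval (- d) (- v) (- u)) as [j [N' HN']]; [lra | lra|].
    exists (j * K)%nat, (Z.of_nat j * N - N')%Z.
    rewrite mult_INR, minus_IZR, mult_IZR, <- INR_IZR_INZ; unfold d in HN'; nra.
Qed.

Section FracMultiples.

Variable be : R.
Hypothesis Hirr : irrational be.

Definition frac_mult (k : nat) : R := mod1 (INR k * be).

Lemma frac_mult_bounds k : 0 <= frac_mult k < 1.
Proof. apply mod1_bounds. Qed.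

Lemma frac_mult_0 : frac_mult 0 = 0.
Proof. unfold frac_mult; apply mod1_eq; [apply eqmod1_eq; simpl; ring | lra]. Qed.

Lemma frac_mult_pos k : (1 <= k)%nat -> 0 < frac_mult k.
Proof.
  intros Hk; destruct (mod1_bounds (INR k * be)) as [[H|H] _]; [exact H|].
  destruct (mod1_eqmod1 (INR k * be)) as [n Hn].
  exfalso; apply (irrational_mult_neq0 be k n); [exact Hirr | lia |].
  unfold frac_mult in H; lra.
Qed.

Lemma frac_mult_S k : eqmod1 (frac_mult (S k)) (frac_mult k + be).
Proof.
  eapply eqmod1_trans; [apply mod1_eqmod1|]; apply eqmod1_sym.
  eapply eqmod1_trans; [apply eqmod1_addr, mod1_eqmod1|].
  apply eqmod1_eq; rewrite S_INR; ring.
Qed.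

Lemma frac_mult_dense u v : 0 <= u -> u < v -> v <= 1 -> exists k, u < frac_mult k < v.
Proof.
  intros Hu Huv Hv; destruct (irrational_dense_mod1 be Hirr u v Huv) as [m [N HmN]].
  exists m; unfold frac_mult; rewrite (mod1_eq _ (INR m * be + IZR N));
    [lra | apply eqmod1_sym, eqmod1_addZ | lra].
Qed.

Lemma frac_mult_add_neq1 j k : (0 < j + k)%nat -> frac_mult j + frac_mult k <> 1.
Proof.
  intros Hjk E; destruct (mod1_eqmod1 (INR j * be)) as [n1 Hn1].
  destruct (mod1_eqmod1 (INR k * be)) as [n2 Hn2].
  apply (irrational_mult_neq0 be (j + k) (n1 + n2 - 1)); [exact Hirr | exact Hjk |].
  unfold frac_mult in E; rewrite plus_INR, minus_IZR, plus_IZR; simpl; lra.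
Qed.

End FracMultiples.

Definition in_carc (s l z : R) : Prop := exists n : Z, s <= z + IZR n <= s + l.

Lemma in_carc_eqmod1 s l z z' : eqmod1 z z' -> in_carc s l z -> in_carc s l z'.
Proof. intros [k Hk] [n Hn]; exists (k + n)%Z; rewrite plus_IZR; lra. Qed.

Lemma in_carc_start s s' l z : eqmod1 s s' -> in_carc s l z -> in_carc s' l z.
Proof. intros [k Hk] [n Hn]; exists (n - k)%Z; rewrite minus_IZR; lra. Qed.

Lemma in_carc_widen s l l' z : l <= l' -> in_carc s l z -> in_carc s l' z.
Proof. intros H [n Hn]; exists n; lra. Qed.

Definition word12 (w : list nat) : Prop := Forall (fun j => j = 1%nat \/ j = 2%nat) w.

Lemma word12_app w w' : word12 w -> word12 w' -> word12 (w ++ w').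
Proof. intros; apply Forall_app; split; assumption. Qed.

Lemma word12_repeat1 m : word12 (repeat 1%nat m).
Proof. induction m; constructor; auto. Qed.

Definition kick (m : nat) : list nat := 2%nat :: repeat 1%nat m.

Lemma word12_kick m : word12 (kick m).
Proof. constructor; [right; reflexivity | apply word12_repeat1]. Qed.

Section Words.

Variables al be : R.
Hypothesis Hal : 0 < al < 1.

Lemma word_map_app w w' y :
  word_map al be (w ++ w') y = word_map al be w (word_map al be w' y).
Proof. apply fold_right_app. Qed.

Lemma word_map_bounds w y : 0 <= y < 1 -> 0 <= word_map al be w y < 1.
Proof.
  intros Hy; induction w as [|j w IH]; [exact Hy|].
  simpl; unfold Tj, T2; destruct (Nat.eqb j 1); [|destruct (Rle_dec _ _)]; apply mod1_bounds.
Qed.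

Lemma word_map_repeat1 m x : eqmod1 (word_map al be (repeat 1%nat m) x) (x + INR m * al).
Proof.
  induction m as [|m IH]; [apply eqmod1_eq; simpl; ring|].
  change (word_map al be (repeat 1%nat (S m)) x)
    with (T1 al (word_map al be (repeat 1%nat m) x)).
  eapply eqmod1_trans; [apply mod1_eqmod1|].
  eapply eqmod1_trans; [apply eqmod1_addr, IH|].
  apply eqmod1_eq; rewrite S_INR; ring.
Qed.

Lemma word_map_repeat1_eq m x N : 0 <= x < 1 -> 0 <= x + INR m * al + IZR N < 1 ->
  word_map al be (repeat 1%nat m) x = x + INR m * al + IZR N.
Proof.
  intros Hx HN; apply eqmod1_unit_eq; [| apply word_map_bounds; exact Hx | exact HN].
  eapply eqmod1_trans; [apply word_map_repeat1|].
  apply eqmod1_sym, eqmod1_addZ.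
Qed.

Lemma kick_lower m x N : 0 <= x < 1 -> 0 <= x + INR m * al + IZR N <= 1 - al ->
  eqmod1 (word_map al be (kick m) x) (x + INR m * al + al + be).
Proof.
  intros Hx HN; change (word_map al be (kick m) x)
    with (T2 al be (word_map al be (repeat 1%nat m) x)).
  rewrite (word_map_repeat1_eq m x N) by (assumption || lra); unfold T2.
  destruct (Rle_dec _ _); [|lra].
  eapply eqmod1_trans; [apply mod1_eqmod1|]; exists N; ring.
Qed.

Lemma kick_upper m x N : 0 <= x < 1 -> 1 - al < x + INR m * al + IZR N < 1 ->
  eqmod1 (word_map al be (kick m) x) (x + INR m * al + al).
Proof.
  intros Hx HN; change (word_map al be (kick m) x)
    with (T2 al be (word_map al be (repeat 1%nat m) x)).
  rewrite (word_map_repeat1_eq m x N) by (assumption || lra); unfold T2.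
  destruct (Rle_dec _ _); [lra|].
  eapply eqmod1_trans; [apply mod1_eqmod1|]; exists N; ring.
Qed.

Lemma kick_lower_in_carc s l m x n N : 0 <= x < 1 ->
  0 <= x + IZR n + INR m * al + IZR N <= 1 - al ->
  s <= x + IZR n + INR m * al + al + be <= s + l ->
  in_carc s l (word_map al be (kick m) x).
Proof.
  intros Hx HN Hs; eapply in_carc_eqmod1.
  - apply eqmod1_sym, (kick_lower m x (n + N)); [exact Hx | rewrite plus_IZR; lra].
  - exists n; lra.
Qed.

Lemma kick_upper_in_carc s l m x n N : 0 <= x < 1 ->
  1 - al < x + IZR n + INR m * al + IZR N < 1 ->
  s <= x + IZR n + INR m * al + al <= s + l ->
  in_carc s l (word_map al be (kick m) x).
Proof.
  intros Hx HN Hs; eapply in_carc_eqmod1.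
  - apply eqmod1_sym, (kick_upper m x (n + N)); [exact Hx | rewrite plus_IZR; lra].
  - exists n; lra.
Qed.

Definition lands_in (w : list nat) (X : R -> Prop) : Prop :=
  word12 w /\ forall y, 0 <= y < 1 -> X (word_map al be w y).

Lemma lands_in_weaken w (X X' : R -> Prop) :
  (forall z, X z -> X' z) -> lands_in w X -> lands_in w X'.
Proof. intros H [Hw HX]; split; auto. Qed.

Lemma lands_in_app w' w (X X' : R -> Prop) : word12 w' -> lands_in w X ->
  (forall x, 0 <= x < 1 -> X x -> X' (word_map al be w' x)) -> lands_in (w' ++ w) X'.
Proof.
  intros Hw' [Hw HX] H; split; [apply word12_app; assumption|].
  intros y Hy; rewrite word_map_app; apply H; [apply word_map_bounds|]; auto.
Qed.

End Words.

Section TwoArcs.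

Variables al be : R.
Hypothesis Hal : 0 < al < 1.
Hypothesis Hdense : dense_mod1 al.

Definition two_arcs (r a b g z : R) : Prop := in_carc r a z \/ in_carc (r + a + g) b z.

Lemma two_arcs_gap_eqmod1 r a b g g' z :
  eqmod1 g g' -> two_arcs r a b g z -> two_arcs r a b g' z.
Proof.
  intros H [Hz|Hz]; [left; exact Hz | right].
  eapply in_carc_start; [|exact Hz].
  eapply eqmod1_trans; [|eapply eqmod1_trans; [exact (eqmod1_addr _ _ (r + a) H)|]];
    apply eqmod1_eq; ring.
Qed.

Lemma two_arcs_collapse r a b g g0 z : eqmod1 g g0 -> -a <= g0 -> g0 + b <= 0 ->
  two_arcs r a b g z -> in_carc r a z.
Proof.
  intros Hg H1 H2 Hz; apply (two_arcs_gap_eqmod1 _ _ _ _ g0) in Hz; [|exact Hg].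
  destruct Hz as [Hz|[n Hn]]; [exact Hz | exists n; lra].
Qed.

(* Rotate so that the gap straddles [0] and the first arc ends just below [1]: the
   kick then moves the second arc by [be] more than the first. *)
Lemma kick_gap w r a b g : lands_in al be w (two_arcs r a b g) ->
  0 <= a < al -> 0 <= b < 1 - al -> 0 < g -> a + g + b < 1 ->
  exists w' r', lands_in al be w' (two_arcs r' a b (g + be)).
Proof.
  intros Hw Ha Hb Hg Hs.
  set (lo := Rmax 0 (al - 1 + g + b)); set (hi := Rmin g (al - a)).
  assert (Hlo : 0 <= lo /\ al - 1 + g + b <= lo) by (split; [apply Rmax_l | apply Rmax_r]).
  assert (Hhi : hi <= g /\ hi <= al - a) by (split; [apply Rmin_l | apply Rmin_r]).
  assert (Hlh : lo < hi) by (apply Rmax_lub_lt; apply Rmin_glb_lt; lra).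
  destruct (Hdense (1 - hi - r - a) (1 - lo - r - a)) as [m [N HmN]]; [lra|].
  exists (kick m ++ w), (r + INR m * al + al).
  apply (lands_in_app al be _ _ _ _ (word12_kick m) Hw); intros x Hx [[n Hn]|[n Hn]].
  - left; apply (kick_upper_in_carc al be Hal _ _ m x n N); lra.
  - right; apply (kick_lower_in_carc al be Hal _ _ m x n (N - 1));
      rewrite ?minus_IZR; simpl; lra.
Qed.

(* Cutting an arc at the preimage of [0] under [T1^m] opens a gap [be] inside it. *)
Lemma split_at_zero w s l Alo Ahi : lands_in al be w (in_carc s l) ->
  0 <= Alo < Ahi -> Ahi <= l -> Ahi <= al -> l - Alo <= 1 - al ->
  exists a w' r, Alo < a < Ahi /\ lands_in al be w' (two_arcs r a (l - a) be).
Proof.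
  intros Hw HA HAl HAal HlA.
  destruct (Hdense (- s - Ahi) (- s - Alo)) as [m [N HmN]]; [lra|].
  exists (- (INR m * al + IZR N) - s), (kick m ++ w), (s + INR m * al + al); split; [lra|].
  apply (lands_in_app al be _ _ _ _ (word12_kick m) Hw); intros x Hx [n Hn].
  destruct (Rlt_le_dec (x + IZR n) (- (INR m * al + IZR N))).
  - left; apply (kick_upper_in_carc al be Hal _ _ m x n (N + 1));
      rewrite ?plus_IZR; simpl; lra.
  - right; apply (kick_lower_in_carc al be Hal _ _ m x n N); lra.
Qed.

(* Cutting at the preimage of [1 - al] instead lets the lower piece overtake the upper one. *)
Lemma split_at_discontinuity w s l Alo Ahi : lands_in al be w (in_carc s l) ->
  0 <= Alo < Ahi -> Ahi <= l -> Ahi <= al -> l - Alo <= 1 - al ->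
  exists a w' r, Alo < a < Ahi /\ lands_in al be w' (two_arcs r a (l - a) (be - l)).
Proof.
  intros Hw HA HAl HAal HlA.
  destruct (Hdense (1 - al - s - l + Alo) (1 - al - s - l + Ahi)) as [m [N HmN]]; [lra|].
  set (p := 1 - al - (INR m * al + IZR N)).
  exists (s + l - p), (kick m ++ w), (p + INR m * al + al); split; [unfold p; lra|].
  apply (lands_in_app al be _ _ _ _ (word12_kick m) Hw); intros x Hx [n Hn].
  destruct (Rle_lt_dec (x + IZR n) p).
  - right; apply (kick_lower_in_carc al be Hal _ _ m x n N); unfold p in *; lra.
  - left; apply (kick_upper_in_carc al be Hal _ _ m x n N); unfold p in *; lra.
Qed.

Lemma two_arcs_iterate a b (G : nat -> R) k : 0 <= a < al -> 0 <= b < 1 - al ->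
  (forall j, (1 <= j < k)%nat -> 0 < G j /\ a + G j + b < 1) ->
  (forall j, eqmod1 (G (S j)) (G j + be)) -> (1 <= k)%nat ->
  (exists w r, lands_in al be w (two_arcs r a b (G 1%nat))) ->
  exists w r, lands_in al be w (two_arcs r a b (G k)).
Proof.
  intros Ha Hb HG HGS Hk Hstart; induction k as [|k IH]; [lia|].
  destruct (Nat.eq_dec k 0) as [->|Hk0]; [exact Hstart|].
  destruct IH as [w [r Hw]]; [intros j Hj; apply HG; lia | lia|].
  destruct (HG k) as [Hg1 Hg2]; [lia|].
  destruct (kick_gap w r a b (G k)) as [w' [r' Hw']]; [assumption .. |].
  exists w', r'; eapply lands_in_weaken; [|exact Hw'].
  intros z; apply two_arcs_gap_eqmod1, eqmod1_sym, HGS.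
Qed.

End TwoArcs.

Section Contraction.

Variables al be : R.
Hypothesis Hal : 0 < al < 1.
Hypothesis Hdense : dense_mod1 al.
Hypothesis Hbe : 0 < be.
Hypothesis Hirr : irrational be.
Hypothesis Hbe_al : 3 * be < al.
Hypothesis Hbe_1al : 3 * be < 1 - al.

Definition contracts_to (l : R) : Prop := exists w s, lands_in al be w (in_carc s l).

Lemma contracts_to_nonneg l : contracts_to l -> 0 <= l.
Proof. intros [w [s [_ Hw]]]; destruct (Hw 0 ltac:(lra)) as [n Hn]; lra. Qed.

Lemma contracts_to_whole : contracts_to (1 - be).
Proof.
  exists (kick 0 ++ nil), (al + be).
  apply (lands_in_app al be _ _ (fun y => 0 <= y < 1) _ (word12_kick 0));
    [split; [constructor | intros y Hy; exact Hy]|].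
  intros x Hx _; destruct (Rle_lt_dec x (1 - al)).
  - apply (kick_lower_in_carc al be Hal _ _ 0 x 0 0); simpl; lra.
  - apply (kick_upper_in_carc al be Hal _ _ 0 x 0 0); simpl; lra.
Qed.

(* Cut the arc at the preimage of [1 - al]: its lower part, of length at least [be],
   is pushed by [be] into the upper part. *)
Lemma contracts_to_shrink l : 2 * be < l < 1 -> contracts_to l -> contracts_to (l - be).
Proof.
  intros Hl [w [s Hw]].
  set (lo := Rmax (s + be) (s + l - al)); set (hi := Rmin (s + l - be) (s + 1 - al)).
  assert (Hlo : s + be <= lo /\ s + l - al <= lo) by (split; [apply Rmax_l | apply Rmax_r]).
  assert (Hhi : hi <= s + l - be /\ hi <= s + 1 - al) by (split; [apply Rmin_l | apply Rmin_r]).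
  assert (Hlh : lo < hi) by (apply Rmax_lub_lt; apply Rmin_glb_lt; lra).
  destruct (Hdense (1 - al - hi) (1 - al - lo)) as [m [N HmN]]; [lra|].
  exists (kick m ++ w), (s + be + INR m * al + al).
  apply (lands_in_app al be _ _ _ _ (word12_kick m) Hw); intros x Hx [n Hn].
  destruct (Rle_lt_dec (x + IZR n) (1 - al - (INR m * al + IZR N))).
  - apply (kick_lower_in_carc al be Hal _ _ m x n N); lra.
  - apply (kick_upper_in_carc al be Hal _ _ m x n N); lra.
Qed.

(* The gap [be] opened inside a nearly optimal arc grows by [be] at each kick; when the
   orbit of [0] under [+be] first comes within [L] below an integer, the second arc has
   slid back into the first, leaving an arc shorter than the infimum [L]. *)
Lemma not_inf_return_below L k : 0 < L < Rmin al (1 - al) -> is_inf contracts_to L ->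
  1 - L <= frac_mult be k -> (forall j, (j < k)%nat -> frac_mult be j < 1 - L) ->
  1 - frac_mult be k < L -> False.
Proof.
  intros HL [Hlow Happrox] Hk Hmin Hu; pose proof (frac_mult_bounds be k).
  remember (1 - frac_mult be k) as u eqn:Hu_def.
  pose proof (Rmin_l al (1 - al)); pose proof (Rmin_r al (1 - al)).
  assert (Hk1 : (1 <= k)%nat).
  { destruct k; [|lia]; rewrite frac_mult_0 in Hk; lra. }
  destruct (finite_pos_lower_bound (fun j => 1 - L - frac_mult be j) k) as [e1 [He1 He1']].
  { intros j Hj; specialize (Hmin j ltac:(lia)); lra. }
  destruct (exists_pos_below3 e1 u (Rmin al (1 - al) - L)) as [e He]; [lra .. |].
  destruct (Happrox e (proj1 He)) as [l [[w [s Hw]] Hl]].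
  assert (HLl : L <= l) by (apply Hlow; exists w, s; exact Hw).
  set (Alo := Rmax u (l - u)).
  assert (HAlo : u <= Alo /\ l - u <= Alo /\ Alo < L).
  { split; [apply Rmax_l | split; [apply Rmax_r | apply Rmax_lub_lt; lra]]. }
  destruct (split_at_zero al be Hal Hdense w s l Alo L) as [a [w1 [r1 [Ha Hw1]]]];
    [exact Hw | lra .. |].
  destruct (two_arcs_iterate al be Hal Hdense a (l - a) (frac_mult be) k) as [w2 [r2 Hw2]];
    [lra | lra | | apply frac_mult_S | exact Hk1 | |].
  - intros j Hj; split; [apply frac_mult_pos; [exact Hirr | lia]|].
    specialize (He1' j Hj); lra.
  - exists w1, r1; eapply lands_in_weaken; [|exact Hw1]; intros z.
    apply two_arcs_gap_eqmod1, eqmod1_sym; unfold frac_mult.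
    eapply eqmod1_trans; [apply mod1_eqmod1 | apply eqmod1_eq; simpl; ring].
  - enough (L <= a) by lra; apply Hlow; exists w2, r2.
    eapply lands_in_weaken; [|exact Hw2]; intros z.
    apply (two_arcs_collapse _ _ _ _ (- u)); [exists 1%Z; simpl; lra | lra | lra].
Qed.

(* The same with the cut at the discontinuity; now the orbit first comes within [L]
   above an integer. *)
Lemma not_inf_return_above L k : 0 < L < Rmin al (1 - al) -> is_inf contracts_to L ->
  0 < frac_mult be k <= L -> (forall j, (j < k)%nat -> ~ (0 < frac_mult be j <= L)) ->
  frac_mult be k < L -> False.
Proof.
  intros HL [Hlow Happrox] Hk Hmin Hu; remember (frac_mult be k) as u eqn:Hu_def.
  pose proof (Rmin_l al (1 - al)); pose proof (Rmin_r al (1 - al)).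
  assert (Hk1 : (1 <= k)%nat).
  { destruct k; [|lia]; rewrite frac_mult_0 in Hu_def; lra. }
  destruct (finite_pos_lower_bound (fun j => frac_mult be j - L) k) as [e1 [He1 He1']].
  { intros j Hj; specialize (Hmin j ltac:(lia)).
    pose proof (frac_mult_pos be Hirr j ltac:(lia)); lra. }
  destruct (exists_pos_below3 e1 u (Rmin al (1 - al) - L)) as [e He]; [lra .. |].
  destruct (Happrox e (proj1 He)) as [l [[w [s Hw]] Hl]].
  assert (HLl : L <= l) by (apply Hlow; exists w, s; exact Hw).
  set (Alo := Rmax u (l - u)).
  assert (HAlo : u <= Alo /\ l - u <= Alo /\ Alo < L).
  { split; [apply Rmax_l | split; [apply Rmax_r | apply Rmax_lub_lt; lra]]. }
  destruct (split_at_discontinuity al be Hal Hdense w s l Alo L) as [a [w1 [r1 [Ha Hw1]]]];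
    [exact Hw | lra .. |].
  destruct (two_arcs_iterate al be Hal Hdense a (l - a) (fun j => frac_mult be j - l) k)
    as [w2 [r2 Hw2]]; [lra | lra | | | exact Hk1 | |].
  - intros j Hj; specialize (He1' j Hj); pose proof (frac_mult_bounds be j); lra.
  - intros j; destruct (frac_mult_S be j) as [n Hn]; exists n; lra.
  - exists w1, r1; eapply lands_in_weaken; [|exact Hw1]; intros z.
    apply two_arcs_gap_eqmod1, eqmod1_addr, eqmod1_sym; unfold frac_mult.
    eapply eqmod1_trans; [apply mod1_eqmod1 | apply eqmod1_eq; simpl; ring].
  - enough (L <= a) by lra; apply Hlow; exists w2, r2.
    eapply lands_in_weaken; [|exact Hw2]; intros z.
    apply (two_arcs_collapse _ _ _ _ (u - l)); [apply eqmod1_eq; lra | lra | lra].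
Qed.

Lemma not_inf_small L : 0 < L < Rmin al (1 - al) -> ~ is_inf contracts_to L.
Proof.
  intros HL Hinf; pose proof (Rmin_l al (1 - al)).
  destruct (least_nat (fun k => 1 - L <= frac_mult be k)) as [k1 [Hk1 Hk1min]].
  { destruct (frac_mult_dense be Hirr (1 - L) 1) as [k Hk]; [lra .. |].
    exists k; lra. }
  destruct (least_nat (fun k => 0 < frac_mult be k <= L)) as [k2 [Hk2 Hk2min]].
  { destruct (frac_mult_dense be Hirr 0 L) as [k Hk]; [lra .. |].
    exists k; lra. }
  pose proof (frac_mult_bounds be k1).
  destruct (Rlt_le_dec (1 - frac_mult be k1) L).
  - apply (not_inf_return_below L k1); try assumption.
    intros j Hj; specialize (Hk1min j Hj); lra.
  - apply (not_inf_return_above L k2); try assumption.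
    assert (Hk2pos : (0 < k2)%nat).
    { destruct k2; [rewrite frac_mult_0 in Hk2; lra | lia]. }
    pose proof (frac_mult_add_neq1 be Hirr k1 k2 ltac:(lia)); lra.
Qed.

Lemma not_inf_pos L : 0 < L -> ~ is_inf contracts_to L.
Proof.
  intros HL Hinf; destruct (Rle_lt_dec L (2 * be)).
  { apply (not_inf_small L); [split; [lra | apply Rmin_glb_lt; lra] | exact Hinf]. }
  destruct Hinf as [Hlow Happrox].
  pose proof (Hlow _ contracts_to_whole).
  destruct (Happrox be Hbe) as [l [Hl HlL]]; pose proof (Hlow l Hl).
  pose proof (Hlow _ (contracts_to_shrink l ltac:(lra) Hl)); lra.
Qed.

Lemma contracts_to_small eps : 0 < eps -> contracts_to eps.
Proof.
  intros Heps; destruct (is_inf_exists contracts_to) as [L [Hlow Happrox]];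
    [exists (1 - be); exact contracts_to_whole | exact contracts_to_nonneg |].
  destruct (Rle_lt_dec L 0) as [HL|HL];
    [|exfalso; exact (not_inf_pos L HL (conj Hlow Happrox))].
  destruct (Happrox eps Heps) as [l [[w [s Hw]] Hl]]; exists w, s.
  eapply lands_in_weaken; [|exact Hw]; intros z; apply in_carc_widen; lra.
Qed.

End Contraction.

Lemma in_arc_eqmod1 a L z y : eqmod1 z y -> a < y < a + L -> L <= 1 -> in_arc a L z.
Proof.
  intros Hzy Hy HL; unfold in_arc; rewrite (mod1_eq _ (y - a)); [lra | | lra].
  exact (eqmod1_addr _ _ (- a) Hzy).
Qed.

Theorem lemma4p1 :
  forall alpha : R, 0 < alpha < 1 -> irrational alpha ->
  exists beta0 : R, 0 < beta0 /\
    forall beta : R, 0 < beta < beta0 -> irrational beta ->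
    forall a L : R, 0 <= a < 1 -> 0 < L <= 1 ->
    exists w : list nat,
      Forall (fun j => j = 1%nat \/ j = 2%nat) w /\
      forall y : R, 0 <= y < 1 -> in_arc a L (word_map alpha beta w y).
Proof.
  intros al Hal Hia; pose proof (irrational_dense_mod1 al Hia) as Hdense.
  assert (Hm : 0 < Rmin al (1 - al)) by (apply Rmin_glb_lt; lra).
  pose proof (Rmin_l al (1 - al)); pose proof (Rmin_r al (1 - al)).
  exists (Rmin al (1 - al) / 3); split; [lra|]; intros be Hbe Hib a L Ha HL.
  destruct (contracts_to_small al be Hal Hdense (proj1 Hbe) Hib ltac:(lra) ltac:(lra) (L / 2))
    as [w [s Hw]]; [lra|].
  destruct (Hdense (a - s) (a - s + L / 2)) as [n [N HnN]]; [lra|].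
  exists (repeat 1%nat n ++ w).
  apply (lands_in_app al be _ _ _ _ (word12_repeat1 n) Hw); intros x Hx [k Hk].
  apply (in_arc_eqmod1 _ _ _ (x + IZR k + INR n * al + IZR N)); [| lra | lra].
  eapply eqmod1_trans; [apply word_map_repeat1|].
  exists (- k - N)%Z; rewrite minus_IZR, opp_IZR; ring.
Qed.
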